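(* On $\mathbb{R}^6$ with coordinates $(q_1,q_2,q_3,p_1,p_2,p_3)$ let $J_2=\begin{pmatrix}0&I_3\\-I_3&0\end{pmatrix}$ and let $J_3$ be the antisymmetric matrix (rows/columns ordered $q_1,q_2,q_3,p_1,p_2,p_3$) with upper-triangular entries $(J_3)_{12}=(J_3)_{13}=(J_3)_{14}=-e^{p_1}$, $(J_3)_{15}=(J_3)_{16}=0$, $(J_3)_{23}=-e^{p_2}$, $(J_3)_{24}=-e^{q_2-q_1}$, $(J_3)_{25}=-e^{p_2}+e^{q_2-q_1}$, $(J_3)_{26}=0$, $(J_3)_{34}=-e^{q_2-q_1}$, $(J_3)_{35}=e^{q_2-q_1}-e^{q_3-q_2}$, $(J_3)_{36}=-e^{p_3}+e^{q_3-q_2}$, $(J_3)_{45}=e^{q_2-q_1}$, $(J_3)_{46}=0$, $(J_3)_{56}=e^{q_3-q_2}$. Let $\mathcal{N}=J_2J_3^{-1}$ and $J_1=\mathcal{N}J_2$. Let $\Phi:\mathbb{R}^6\to\mathbb{R}^5$ be given by $u_1=-e^{p_1}$, $u_3=-e^{p_2}$, $u_5=-e^{p_3}$, $u_2=e^{q_2-q_1}$, $u_4=e^{q_3-q_2}$. Then $\Phi$ maps $J_1$ to the Poisson bracket $\pi_1$ on $\mathbb{R}^5$ (i.e. $\{f\circ\Phi,g\circ\Phi\}_{J_1}=\{f,g\}_{\pi_1}\circ\Phi$) given by $\{u_1,u_2\}=u_2$, $\{u_1,u_3\}=-u_2$, $\{u_1,u_4\}=\frac{u_2u_4}{u_3}$,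 $\{u_1,u_5\}=-\frac{u_2u_4}{u_3}$, $\{u_2,u_3\}=u_2$, $\{u_2,u_4\}=-\frac{u_2u_4}{u_3}$, $\{u_2,u_5\}=\frac{u_2u_4}{u_3}$, $\{u_3,u_4\}=u_4$, $\{u_3,u_5\}=-u_4$, $\{u_4,u_5\}=u_4$.
   Context: A bracket given by an antisymmetric matrix $J$ on $\mathbb{R}^m$ with coordinates $x_k$ is $\{f,g\}_J=\sum_{k,l}J_{kl}\,\partial_{x_k}f\,\partial_{x_l}g$. *)

From HB Require Import structures.
From mathcomp Require Import all_boot all_order all_algebra.
From mathcomp Require Import all_classical all_reals all_analysis.
Set Implicit Arguments. Unset Strict Implicit. Unset Printing Implicit Defensive.
Import Order.TTheory GRing.Theory Num.Theory.
Import numFieldNormedType.Exports.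
Local Open Scope ring_scope.

Section Defs.
Variable R : realType.

Definition q1 (x : 'rV[R]_6) := x 0 (inord 0).
Definition q2 (x : 'rV[R]_6) := x 0 (inord 1).
Definition q3 (x : 'rV[R]_6) := x 0 (inord 2).
Definition p1 (x : 'rV[R]_6) := x 0 (inord 3).
Definition p2 (x : 'rV[R]_6) := x 0 (inord 4).
Definition p3 (x : 'rV[R]_6) := x 0 (inord 5).

Definition basis_vec (n : nat) (k : 'I_n) : 'rV[R]_n := delta_mx 0 k.

Definition partial (n : nat) (k : 'I_n) (f : 'rV[R]_n -> R) (x : 'rV[R]_n) : R :=
  'D_(basis_vec k) f x.

Definition bracket (n : nat) (J : 'rV[R]_n -> 'M[R]_n) (f g : 'rV[R]_n -> R)
  (x : 'rV[R]_n) : R :=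
  \sum_(k < n) \sum_(l < n) J x k l * partial k f x * partial l g x.

Definition J2 (x : 'rV[R]_6) : 'M[R]_6 :=
  \matrix_(i < 6, j < 6)
    (if (i < 3)%N && (j == i + 3 :> nat) then 1
     else if (j < 3)%N && (i == j + 3 :> nat) then -1 else 0).

(* Upper-triangular entries (1-based in the paper, 0-based here). *)
Definition J3_up (x : 'rV[R]_6) (i j : nat) : R :=
  let s := expR (q2 x - q1 x) in
  let t := expR (q3 x - q2 x) in
  match i, j with
  | 0, 1 | 0, 2 | 0, 3 => - expR (p1 x)
  | 0, 4 | 0, 5 => 0
  | 1, 2 => - expR (p2 x)
  | 1, 3 => - s
  | 1, 4 => - expR (p2 x) + s
  | 1, 5 => 0
  | 2, 3 => - s
  | 2, 4 => s - t
  | 2, 5 => - expR (p3 x) + t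
  | 3, 4 => s
  | 3, 5 => 0
  | 4, 5 => t
  | _, _ => 0
  end.

Definition J3 (x : 'rV[R]_6) : 'M[R]_6 :=
  \matrix_(i < 6, j < 6)
    (if (i < j)%N then J3_up x i j
     else if (j < i)%N then - J3_up x j i else 0).

Definition Nrec (x : 'rV[R]_6) : 'M[R]_6 := J2 x *m invmx (J3 x).
Definition J1 (x : 'rV[R]_6) : 'M[R]_6 := Nrec x *m J2 x.

(* Phi : R^6 -> R^5 ; coordinates u1..u5 are indices 0..4. *)
Definition Phi (x : 'rV[R]_6) : 'rV[R]_5 :=
  \row_(i < 5)
    match val i with
    | 0 => - expR (p1 x)
    | 1 => expR (q2 x - q1 x)
    | 2 => - expR (p2 x)
    | 3 => expR (q3 x - q2 x)
    | _ => - expR (p3 x)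
    end.

Definition pi1_up (u : 'rV[R]_5) (i j : nat) : R :=
  let u2 := u 0 (inord 1) in
  let u3 := u 0 (inord 2) in
  let u4 := u 0 (inord 3) in
  match i, j with
  | 0, 1 => u2
  | 0, 2 => - u2
  | 0, 3 => u2 * u4 / u3
  | 0, 4 => - (u2 * u4 / u3)
  | 1, 2 => u2
  | 1, 3 => - (u2 * u4 / u3)
  | 1, 4 => u2 * u4 / u3
  | 2, 3 => u4
  | 2, 4 => - u4
  | 3, 4 => u4
  | _, _ => 0
  end.

Definition pi1 (u : 'rV[R]_5) : 'M[R]_5 :=
  \matrix_(i < 5, j < 5)
    (if (i < j)%N then pi1_up u i j
     else if (j < i)%N then - pi1_up u j i else 0).

End Defs.

From HB Require Import structures.
From mathcomp Require Import all_boot all_order all_algebra.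
From mathcomp Require Import all_classical all_reals all_analysis.
From mathcomp Require Import ring.
Import Order.TTheory GRing.Theory Num.Theory.
Import numFieldNormedType.Exports.
Set Implicit Arguments. Unset Strict Implicit. Unset Printing Implicit Defensive.
Local Open Scope ring_scope.

(* A bracket transforms under a map F by congruence with the Jacobian of F
   (chain rule), so it suffices to check DPhi J1 DPhi^T = pi1 o Phi.  Each u_i
   is +-exp of a linear form l_i in (q, p), hence DPhi is a constant 0/+-1
   matrix scaled by diag(u).  With J1 = J2 J3^-1 J2 and J3^-1 explicit, the
   identity becomes one between rational functions of e^p_i and
   e^(q_(i+1) - q_i), checked entrywise. *)

Section Partial.
Variable R : realType.

Lemma partial_ext n k (f g : 'rV[R]_n -> R) x :
  f =1 g -> partial k f x = partial k g x.
Proof. by move=> /funext->. Qed.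

Lemma eq_differentiable (V W : normedModType R) (f g : V -> W) x :
  f =1 g -> differentiable f x = differentiable g x.
Proof. by move=> /funext->. Qed.

Lemma diff_partialE n (f : 'rV[R]_n -> R) x v : differentiable f x ->
  'd f x v = \sum_(i < n) v 0 i * partial i f x.
Proof.
move=> df; rewrite {1}(row_sum_delta v) linear_sum; apply: eq_bigr => i _.
by rewrite linearZ /= /partial /basis_vec deriveE.
Qed.

Lemma jacobianE m n (F : 'rV[R]_m -> 'rV[R]_n) x k i :
  differentiable F x -> 'J F x k i = partial k (fun t => F t 0 i) x.
Proof.
move=> dF; rewrite /jacobian [LHS]mxE -deriveE // derive_mx ?mxE //.
exact: diff_derivable.
Qed.

Lemma differentiable_rV m n (F : 'rV[R]_m -> 'rV[R]_n) x :
  (forall i, differentiable (fun t => F t 0 i) x) -> differentiable F x.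
Proof.
move=> dFi.
have -> : F = \sum_(i < n) (fun t => F t 0 i *: (delta_mx 0 i : 'rV[R]_n)).
  by apply/funext => t; rewrite fct_sumE {1}(row_sum_delta (F t)).
by apply: differentiable_sum => i; apply: differentiableZl.
Qed.

Lemma partial_coord n (k j : 'I_n) x :
  partial k (fun t : 'rV[R]_n => t 0 j) x = (k == j)%:R.
Proof.
have /matrixP/(_ 0 j) := derive_mx (@derivable_id _ _ x (delta_mx 0 k)).
by rewrite derive_id !mxE eqxx eq_sym /partial /basis_vec => <-.
Qed.

Lemma differentiable_expR_comp n (u : 'rV[R]_n -> R) x :
  differentiable u x -> differentiable (fun t => expR (u t)) x.
Proof.
move=> du; apply: (@differentiable_comp _ _ _ _ u expR) => //.
exact/derivable1_diffP/derivable_expR.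
Qed.

Lemma partial_expR_comp n k (u : 'rV[R]_n -> R) x : differentiable u x ->
  partial k (fun t => expR (u t)) x = expR (u x) * partial k u x.
Proof.
move=> du; have de : differentiable expR (u x).
  exact/derivable1_diffP/derivable_expR.
rewrite /partial deriveE; last exact: differentiable_expR_comp.
rewrite (diff_comp du de) /= -(deriveE _ du); set w := 'D_ _ u x.
rewrite -[w in LHS]mulr1 -[w * 1]/(w *: (1 : R)) linearZ /= -deriveE //.
by rewrite derive_val mulrC.
Qed.

Lemma partial_oppr_expR_coord n k (j : 'I_n) x :
  partial k (fun t : 'rV[R]_n => - expR (t 0 j)) x =
  - expR (x 0 j) * (k == j)%:R.
Proof.
have dj : differentiable (fun t : 'rV[R]_n => t 0 j) x.
  exact: differentiable_coord.
rewrite /partial (deriveN (f := fun t : 'rV[R]_n => expR (t 0 j))); last first.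
  exact/diff_derivable/differentiable_expR_comp.
by rewrite -/(partial _ _ _) partial_expR_comp // partial_coord mulNr.
Qed.

Lemma partial_expR_coordB n k (i j : 'I_n) x :
  partial k (fun t : 'rV[R]_n => expR (t 0 j - t 0 i)) x =
  expR (x 0 j - x 0 i) * ((k == j)%:R - (k == i)%:R).
Proof.
have dc (l : 'I_n) : differentiable (fun t : 'rV[R]_n => t 0 l) x.
  exact: differentiable_coord.
rewrite partial_expR_comp; last exact: differentiableB.
rewrite /partial (deriveB (f := fun t : 'rV[R]_n => t 0 j));
  try exact: diff_derivable.
by rewrite -!/(partial _ _ _) !partial_coord.
Qed.

End Partial.

Section BracketPullback.
Variable R : realType.

Definition gradient n (f : 'rV[R]_n -> R) (x : 'rV[R]_n) : 'cV[R]_n :=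
  \col_k partial k f x.

Lemma bracketE n (J : 'rV[R]_n -> 'M[R]_n) f g x :
  bracket J f g x = ((gradient f x)^T *m J x *m gradient g x) 0 0.
Proof.
rewrite /bracket mxE exchange_big; apply: eq_bigr => l _.
rewrite !mxE big_distrl; apply: eq_bigr => k _.
by rewrite !mxE /= (mulrC (J x k l)).
Qed.

Lemma gradient_comp m n (F : 'rV[R]_m -> 'rV[R]_n) (f : 'rV[R]_n -> R) x :
  differentiable F x -> differentiable f (F x) ->
  gradient (f \o F) x = 'J F x *m gradient f (F x).
Proof.
move=> dF df; apply/colP => k; rewrite !mxE /partial deriveE; last first.
  exact: differentiable_comp.
rewrite diff_comp //= diff_partialE //; apply: eq_bigr => i _.
by rewrite !mxE.
Qed.

(* ['J F x] acts on row vectors ('D_v F x = v *m 'J F x), whence the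
   transposed congruence. *)
Lemma bracket_comp m n (J : 'rV[R]_m -> 'M[R]_m) (P : 'rV[R]_n -> 'M[R]_n)
    (F : 'rV[R]_m -> 'rV[R]_n) (f g : 'rV[R]_n -> R) x :
  differentiable F x -> differentiable f (F x) -> differentiable g (F x) ->
  ('J F x)^T *m J x *m 'J F x = P (F x) ->
  bracket J (f \o F) (g \o F) x = bracket P f g (F x).
Proof.
move=> dF df dg JP; rewrite !bracketE.
rewrite (gradient_comp dF df) (gradient_comp dF dg) -JP.
by rewrite trmx_mul !mulmxA.
Qed.

End BracketPullback.

Section TodaPushforward.
Variable R : realType.
Implicit Types x : 'rV[R]_6.

Lemma differentiable_Phi x : differentiable (@Phi R) x.
Proof.
have dc (l : 'I_6) : differentiable (fun t : 'rV[R]_6 => t 0 l) x.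
  exact: differentiable_coord.
apply: differentiable_rV => i; under eq_differentiable => t do rewrite mxE.
case: i => [[|[|[|[|[|i]]]]] Hi] //=; rewrite /p1 /p2 /p3 /q1 /q2 /q3;
  do ?[apply: (differentiableN (f := fun t => expR _))];
  apply: differentiable_expR_comp; do ?apply: differentiableB; exact: dc.
Qed.

(* u_i = +-exp (l_i x); column i holds the coefficients of the linear form l_i. *)
Definition Phi_exponent : 'M[R]_(6, 5) :=
  \matrix_(k < 6, i < 5)
    match val k, val i with
    | 3, 0 | 1, 1 | 4, 2 | 2, 3 | 5, 4 => 1
    | 0, 1 | 1, 3 => -1
    | _, _ => 0
    end.

Lemma jacobian_Phi x : 'J (@Phi R) x = Phi_exponent *m diag_mx (Phi x).
Proof.
apply/matrixP => k i; rewrite jacobianE; last exact: differentiable_Phi.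
rewrite mul_mx_diag !mxE; under partial_ext => t do rewrite mxE.
case: i => [[|[|[|[|[|i]]]]] Hi] //=; rewrite /p1 /p2 /p3 /q1 /q2 /q3.
all: rewrite ?partial_oppr_expR_coord ?partial_expR_coordB.
all: case: k => [[|[|[|[|[|[|k]]]]]] Hk] //=.
all: by rewrite -!val_eqE /= !inordK // !eqE /=; ring.
Qed.

Definition hamiltonian_exponent : 'M[R]_(6, 5) :=
  \matrix_(k < 6, i < 5)
    match val k, val i with
    | 0, 0 | 1, 2 | 2, 4 | 3, 1 | 4, 3 => 1
    | 4, 1 | 5, 3 => -1
    | _, _ => 0
    end.

Lemma J2_mulmx_Phi_exponent x : J2 x *m Phi_exponent = hamiltonian_exponent.
Proof.
apply/matrixP => k i; rewrite !mxE !big_ord_recr big_ord0 /= !mxE /=.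
case: k => [[|[|[|[|[|[|k]]]]]] Hk] //; case: i => [[|[|[|[|[|i]]]]] Hi] //=.
all: ring.
Qed.

Lemma trmx_J2 x : (J2 x)^T = - J2 x.
Proof.
apply/matrixP => k l; rewrite !mxE.
case: k => [[|[|[|[|[|[|k]]]]]] Hk] //; case: l => [[|[|[|[|[|[|l]]]]]] Hl] //=.
all: rewrite ?oppr0 ?opprK //.
Qed.

Definition skew_mx n (up : nat -> nat -> R) : 'M[R]_n :=
  \matrix_(i < n, j < n)
    (if (i < j)%N then up i j else if (j < i)%N then - up j i else 0).

(* det (J3 x) = e^(2 (p1 + p2 + p3)); the numerators below are, up to sign,
   Pfaffians of 4x4 principal minors of J3 x. *)
Definition J3inv x : 'M[R]_6 :=
  let a := expR (p1 x) in let b := expR (p2 x) in let c := expR (p3 x) in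
  let s := expR (q2 x - q1 x) in let t := expR (q3 x - q2 x) in
  (a * b * c)^-1 *: skew_mx 6 (fun i j => match i, j with
    | 0, 1 => c * s
    | 0, 2 => - s * t
    | 0, 3 => b * c - c * s + s * t
    | 0, 4 => - c * s + s * t
    | 0, 5 => s * t
    | 1, 2 => a * t
    | 1, 3 => - a * t
    | 1, 4 => a * c - a * t
    | 1, 5 => - a * t
    | 2, 3 => a * t
    | 2, 5 => a * b
    | 3, 4 => - a * c + a * t
    | 3, 5 => a * t - a * b
    | 4, 5 => - a * b
    | _, _ => 0
    end).

Lemma J3_mulmx_J3inv x : J3 x *m J3inv x = 1%:M.
Proof.
apply/matrixP => i j; rewrite !mxE !big_ord_recr big_ord0 /= !mxE /=.
have := expR_eq0 (p1 x); have := expR_eq0 (p2 x); have := expR_eq0 (p3 x).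
case: i => [[|[|[|[|[|[|i]]]]]] Hi] //; case: j => [[|[|[|[|[|[|j]]]]]] Hj] //=.
all: move: (expR (p1 x)) (expR (p2 x)) (expR (p3 x)) => a b c c0 b0 a0.
all: move: (expR (q2 x - q1 x)) (expR (q3 x - q2 x)) => s t.
all: by field; rewrite a0 b0 c0.
Qed.

Lemma invmx_J3 x : invmx (J3 x) = J3inv x.
Proof.
have J3K := J3_mulmx_J3inv x; have [J3_unit _] := mulmx1_unit J3K.
by rewrite -[LHS]mulmx1 -J3K mulmxA mulVmx ?mul1mx.
Qed.

Lemma Phi_pushforward_J3inv x :
  diag_mx (Phi x) *m (hamiltonian_exponent^T *m J3inv x *m hamiltonian_exponent)
    *m diag_mx (Phi x) = - pi1 (Phi x).
Proof.
apply/matrixP => i j; rewrite mul_mx_diag mul_diag_mx !mxE.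
rewrite !big_ord_recr !big_ord0 /= !mxE /= !big_ord_recr !big_ord0 /= !mxE /=.
have := expR_eq0 (p1 x); have := expR_eq0 (p2 x); have := expR_eq0 (p3 x).
case: i => [[|[|[|[|[|i]]]]] Hi] //; case: j => [[|[|[|[|[|j]]]]] Hj] //=.
all: rewrite ?mxE /= ?inordK //=.
all: move: (expR (p1 x)) (expR (p2 x)) (expR (p3 x)) => a b c c0 b0 a0.
all: move: (expR (q2 x - q1 x)) (expR (q3 x - q2 x)) => s t.
all: by field; rewrite a0 b0 c0.
Qed.

Lemma Phi_pushforward_J1 x :
  ('J (@Phi R) x)^T *m J1 x *m 'J (@Phi R) x = pi1 (Phi x).
Proof.
have J2_Phi_exponent : Phi_exponent^T *m J2 x = - hamiltonian_exponent^T.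
  by rewrite -(J2_mulmx_Phi_exponent x) trmx_mul trmx_J2 mulmxN opprK.
rewrite jacobian_Phi /J1 /Nrec invmx_J3 trmx_mul tr_diag_mx !mulmxA.
rewrite -(mulmxA (diag_mx _)) J2_Phi_exponent -(mulmxA _ (J2 x)).
rewrite J2_mulmx_Phi_exponent mulmxN !mulNmx; apply: oppr_inj.
by rewrite opprK -Phi_pushforward_J3inv !mulmxA.
Qed.
End TodaPushforward.

Theorem mainTheorem3 (R : realType) (f g : 'rV[R]_5 -> R) (x : 'rV[R]_6) :
  differentiable f (Phi x) -> differentiable g (Phi x) ->
  bracket (@J1 R) (f \o @Phi R) (g \o @Phi R) x = bracket (@pi1 R) f g (Phi x).
Proof.
move=> df dg; apply: bracket_comp => //; first exact: differentiable_Phi.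
exact: Phi_pushforward_J1.
Qed.
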